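(* Let $P_0>0$, $T>0$, $\sigma>0$, $\tau>0$, $w\in\mathbb R$, $P_t=\frac{P_0}{1+P_0t}$, $\alpha(t)=-\frac{(1+P_0t)(T-t)}{1+P_0(2T-t)}$, $\gamma(t)=\frac12\log\!\big(\frac{(1+P_0t)(1+P_0(2T-t))}{(1+P_0T)^2}\big)$, $\eta(t)=\frac{\tau}{2}\int_t^T\alpha(s)ds$, $\zeta(t)=-\int_t^T\big(\frac{\tau}{2}[\log\frac{\pi\tau}{\sigma^2}-\gamma(s)]-P_s^2\eta(s)\big)ds$ ($\pi=3.14159\ldots$). Then $$V(t,x,m)=e^{\alpha(t)m^2+\gamma(t)}(x-w)^2+\eta(t)m^2+\zeta(t)$$ satisfies, for all $t\in[0,T]$, $x,m\in\mathbb R$, $$0=V_t+\frac{P_t^2}{2}V_{mm}-\frac{(mV_x+P_tV_{xm})^2}{2V_{xx}}-\frac{\tau}{2}\log\!\Big(\frac{2\pi\tau}{\sigma^2V_{xx}}\Big),\qquad V(T,x,m)=(x-w)^2.$$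
   Context: This is the reduced HJB equation of entropy-regularized mean–variance control under Bayesian drift uncertainty, written along the deterministic posterior-variance path $P=P_t$ (which satisfies $dP_t/dt=-P_t^2$); $x$ is discounted wealth and $m$ the posterior mean of the unknown Sharpe ratio. *)

From Stdlib Require Import Reals.
From Coquelicot Require Import Coquelicot.
Open Scope R_scope.

Definition Pt (P0 t : R) : R := P0 / (1 + P0 * t).

Definition alpha (P0 T t : R) : R :=
  - ((1 + P0 * t) * (T - t)) / (1 + P0 * (2 * T - t)).

Definition gamma (P0 T t : R) : R :=
  / 2 * ln (((1 + P0 * t) * (1 + P0 * (2 * T - t))) / (1 + P0 * T) ^ 2).

Definition eta (P0 T tau t : R) : R :=
  tau / 2 * RInt (fun s => alpha P0 T s) t T.

Definition zeta (P0 T sigma tau t : R) : R :=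
  - RInt (fun s => tau / 2 * (ln (PI * tau / sigma ^ 2) - gamma P0 T s)
                   - (Pt P0 s) ^ 2 * eta P0 T tau s) t T.

Definition Vfun (P0 T sigma tau w t x m : R) : R :=
  exp (alpha P0 T t * m ^ 2 + gamma P0 T t) * (x - w) ^ 2
  + eta P0 T tau t * m ^ 2 + zeta P0 T sigma tau t.

(* Since V_xx = 2 e^(alpha m^2 + gamma) > 0, every term of the HJB residual is a polynomial in
   m and (x - w) times a power of E = e^(alpha m^2 + gamma); the logarithm contributes
   -(tau/2)(log(pi tau / sigma^2) - alpha m^2 - gamma).  Matching coefficients, the residual
   vanishes as soon as
     alpha' = (1 + 2 alpha P)^2 - 2 alpha^2 P^2   (coefficient of E m^2 (x - w)^2),
     gamma' = - P^2 alpha                         (coefficient of E (x - w)^2),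
     eta'   = - (tau/2) alpha                     (coefficient of m^2),
     zeta'  = (tau/2)(log(pi tau / sigma^2) - gamma) - P^2 eta   (constant term),
   and these are checked directly from the closed forms, using P' = - P^2 and the fundamental
   theorem of calculus for eta and zeta.  All coefficients are smooth on (-1/P0, 2T). *)

From Stdlib Require Import Reals Lra.
From Coquelicot Require Import Coquelicot.
Open Scope R_scope.

Lemma is_derive_RInt_lower_bound (f : R -> R) lo hi a b :
  lo < a < hi -> lo < b < hi -> (forall s, lo < s < hi -> continuous f s) ->
  is_derive (fun x => RInt f x b) a (- f a).
Proof.
intros Ha Hb Hf.
apply (is_derive_RInt' f (fun x => RInt f x b) a b); [| apply Hf; lra].
assert (Hr : 0 < Rmin (a - lo) (hi - a)) by (apply Rmin_pos; lra).
exists (mkposreal _ Hr); intros y Hy.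
change (Rabs (y - a) < Rmin (a - lo) (hi - a)) in Hy.
apply Rabs_def2 in Hy.
pose proof (Rmin_l (a - lo) (hi - a)); pose proof (Rmin_r (a - lo) (hi - a)).
refine (RInt_correct _ _ _ _); apply ex_RInt_continuous; intros z [Hz1 Hz2]; apply Hf; split.
- apply Rlt_le_trans with (Rmin y b); [apply Rmin_glb_lt |]; lra.
- apply Rle_lt_trans with (Rmax y b); [| apply Rmax_lub_lt]; lra.
Qed.

Section Coefficients.

Variables P0 T : R.
Hypotheses (P0_pos : 0 < P0) (T_pos : 0 < T).

Lemma denominators_pos s :
  - / P0 < s < 2 * T -> 0 < 1 + P0 * s /\ 0 < 1 + P0 * (2 * T - s).
Proof.
intros [Hs1 Hs2].
assert (P0 * / P0 = 1) by (field; lra).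
split; nra.
Qed.

Lemma horizon_in_domain t : 0 <= t <= T -> - / P0 < t < 2 * T.
Proof. pose proof (Rinv_0_lt_compat _ P0_pos); lra. Qed.

Lemma is_derive_alpha t : - / P0 < t < 2 * T ->
  is_derive (alpha P0 T) t
    (1 + 4 * alpha P0 T t * Pt P0 t + 2 * alpha P0 T t ^ 2 * Pt P0 t ^ 2).
Proof.
intros Ht; destruct (denominators_pos t Ht).
unfold alpha, Pt; auto_derive; [lra | field; lra].
Qed.

Lemma is_derive_gamma t : - / P0 < t < 2 * T ->
  is_derive (gamma P0 T) t (- Pt P0 t ^ 2 * alpha P0 T t).
Proof.
intros Ht; destruct (denominators_pos t Ht).
assert (0 < 1 + P0 * T) by nra.
unfold gamma, alpha, Pt; auto_derive.
- apply Rdiv_lt_0_compat; nra.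
- field; lra.
Qed.

Lemma continuous_alpha s : - / P0 < s < 2 * T -> continuous (alpha P0 T) s.
Proof.
intros Hs; apply (ex_derive_continuous (alpha P0 T)).
eexists; now apply is_derive_alpha.
Qed.

Lemma is_derive_eta tau t : - / P0 < t < 2 * T ->
  is_derive (eta P0 T tau) t (- (tau / 2 * alpha P0 T t)).
Proof.
intros Ht; unfold eta.
replace (- (tau / 2 * alpha P0 T t)) with (tau / 2 * - alpha P0 T t) by ring.
apply (is_derive_scal (fun x => RInt (alpha P0 T) x T)).
apply (is_derive_RInt_lower_bound _ (- / P0) (2 * T)); [easy | | exact continuous_alpha].
pose proof (Rinv_0_lt_compat _ P0_pos); lra.
Qed.

Lemma is_derive_zeta sigma tau t : - / P0 < t < 2 * T ->
  is_derive (zeta P0 T sigma tau) t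
    (tau / 2 * (ln (PI * tau / sigma ^ 2) - gamma P0 T t) - Pt P0 t ^ 2 * eta P0 T tau t).
Proof.
intros Ht; unfold zeta.
set (g s := tau / 2 * (ln (PI * tau / sigma ^ 2) - gamma P0 T s) - Pt P0 s ^ 2 * eta P0 T tau s).
change (is_derive (fun x => - RInt g x T) t (g t)).
rewrite <- (Ropp_involutive (g t)).
apply (is_derive_opp (fun x => RInt g x T)).
apply (is_derive_RInt_lower_bound _ (- / P0) (2 * T));
  [easy | pose proof (Rinv_0_lt_compat _ P0_pos); lra |].
intros s Hs; destruct (denominators_pos s Hs).
apply (ex_derive_continuous g); unfold g, Pt; auto_derive; repeat split.
- eexists; now apply is_derive_gamma.
- lra.
- eexists; now apply is_derive_eta.
Qed.

End Coefficients.

Lemma Derive_profile_x A G H Z w m x :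
  Derive (fun y => exp (A * m ^ 2 + G) * (y - w) ^ 2 + H * m ^ 2 + Z) x
  = exp (A * m ^ 2 + G) * (2 * (x - w)).
Proof. apply is_derive_unique; auto_derive; [easy | simpl; ring]. Qed.

Lemma Derive_profile_xx A G H Z w m x :
  Derive (fun y => Derive (fun z => exp (A * m ^ 2 + G) * (z - w) ^ 2 + H * m ^ 2 + Z) y) x
  = 2 * exp (A * m ^ 2 + G).
Proof.
rewrite (Derive_ext _ _ _ (Derive_profile_x A G H Z w m)).
apply is_derive_unique; auto_derive; [easy | simpl; ring].
Qed.

Lemma Derive_profile_xm A G H Z w m x :
  Derive (fun n => Derive (fun y => exp (A * n ^ 2 + G) * (y - w) ^ 2 + H * n ^ 2 + Z) x) m
  = 2 * exp (A * m ^ 2 + G) * (2 * A * m) * (x - w).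
Proof.
rewrite (Derive_ext _ (fun n => exp (A * n ^ 2 + G) * (2 * (x - w))));
  [| intro; apply Derive_profile_x].
apply is_derive_unique; auto_derive; [easy | simpl; ring].
Qed.

Lemma Derive_profile_mm A G H Z w m x :
  Derive (fun n => Derive (fun k => exp (A * k ^ 2 + G) * (x - w) ^ 2 + H * k ^ 2 + Z) n) m
  = exp (A * m ^ 2 + G) * (2 * A + 4 * A ^ 2 * m ^ 2) * (x - w) ^ 2 + 2 * H.
Proof.
rewrite (Derive_ext _ (fun n => exp (A * n ^ 2 + G) * (2 * A * n) * (x - w) ^ 2 + 2 * H * n)).
- apply is_derive_unique; auto_derive; [easy | simpl; ring].
- intro n; apply is_derive_unique; auto_derive; [easy | simpl; ring].
Qed.

Lemma Derive_profile_t (A G H Z : R -> R) dA dG dH dZ w x m t :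
  is_derive A t dA -> is_derive G t dG -> is_derive H t dH -> is_derive Z t dZ ->
  Derive (fun s => exp (A s * m ^ 2 + G s) * (x - w) ^ 2 + H s * m ^ 2 + Z s) t
  = exp (A t * m ^ 2 + G t) * (dA * m ^ 2 + dG) * (x - w) ^ 2 + dH * m ^ 2 + dZ.
Proof.
intros HA HG HH HZ; apply is_derive_unique; auto_derive.
- repeat split; eexists; eassumption.
- change (Derive (fun s => A s) t) with (Derive A t).
  change (Derive (fun s => G s) t) with (Derive G t).
  change (Derive (fun s => H s) t) with (Derive H t).
  change (Derive (fun s => Z s) t) with (Derive Z t).
  rewrite (is_derive_unique _ _ _ HA), (is_derive_unique _ _ _ HG),
    (is_derive_unique _ _ _ HH), (is_derive_unique _ _ _ HZ); simpl; ring.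
Qed.

Lemma ln_div_twice_exp c u : 0 < c ->
  ln (2 * c / (2 * exp u)) = ln c - u.
Proof.
intros Hc; pose proof (exp_pos u).
replace (2 * c / (2 * exp u)) with (c * / exp u) by (field; lra).
rewrite ln_mult, ln_Rinv, ln_exp; [ring | | | apply Rinv_0_lt_compat]; easy.
Qed.

Lemma Vfun_terminal P0 T sigma tau w x m : 0 < P0 -> 0 < T ->
  Vfun P0 T sigma tau w T x m = (x - w) ^ 2.
Proof.
intros HP0 HT; unfold Vfun, zeta, eta, alpha, gamma.
assert (0 < 1 + P0 * T) by nra.
rewrite !RInt_point, Rminus_diag, Rmult_0_r.
replace ((1 + P0 * T) * (1 + P0 * (2 * T - T)) / (1 + P0 * T) ^ 2) with 1 by (field; lra).
rewrite ln_1, Rmult_0_r, Rdiv_opp_l, Rdiv_0_l, Ropp_0, Rmult_0_l, !Rplus_0_r, exp_0.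
unfold zero; simpl; ring.
Qed.

Theorem mainTheorem7 (P0 T sigma tau w : R) :
  0 < P0 -> 0 < T -> 0 < sigma -> 0 < tau ->
  let V := Vfun P0 T sigma tau w in
  (forall t x m, 0 <= t <= T ->
     let Vt  := Derive (fun s => V s x m) t in
     let Vx  := Derive (fun y => V t y m) x in
     let Vxx := Derive (fun y => Derive (fun z => V t z m) y) x in
     let Vmm := Derive (fun n => Derive (fun k => V t x k) n) m in
     let Vxm := Derive (fun n => Derive (fun y => V t y n) x) m in
     0 = Vt + (Pt P0 t) ^ 2 / 2 * Vmm
         - (m * Vx + Pt P0 t * Vxm) ^ 2 / (2 * Vxx)
         - tau / 2 * ln (2 * PI * tau / (sigma ^ 2 * Vxx))) /\
  (forall x m, V T x m = (x - w) ^ 2).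
Proof.
intros HP0 HT Hsigma Htau V; split; [| now intros; apply Vfun_terminal].
intros t x m Ht; cbv zeta; unfold V, Vfun.
pose proof (horizon_in_domain P0 T HP0 HT t Ht) as Hdom.
rewrite Derive_profile_xx, Derive_profile_xm, Derive_profile_mm, Derive_profile_x.
rewrite (Derive_profile_t _ _ _ _ _ _ _ _ w x m t
  (is_derive_alpha P0 T HP0 t Hdom) (is_derive_gamma P0 T HP0 t Hdom)
  (is_derive_eta P0 T HP0 HT tau t Hdom) (is_derive_zeta P0 T HP0 HT sigma tau t Hdom)).
replace (2 * PI * tau / (sigma ^ 2 * (2 * exp (alpha P0 T t * m ^ 2 + gamma P0 T t))))
  with (2 * (PI * tau / sigma ^ 2) / (2 * exp (alpha P0 T t * m ^ 2 + gamma P0 T t)))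
  by (field; split; [apply exp_neq_0 | lra]).
rewrite ln_div_twice_exp by (pose proof PI_RGT_0; apply Rdiv_lt_0_compat; nra).
field; apply exp_neq_0.
Qed.
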